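(* Let $t$ be a positive integer and let $M$ be a matroid with the $(t,2t)$-property. Then $M$ has no restriction isomorphic to the uniform matroid $U_{t,3t}$.
   Context: A matroid $M$ has the $(t,2t)$-property if every $t$-element subset of $E(M)$ is contained in both a $2t$-element circuit and a $2t$-element cocircuit of $M$. *)

From mathcomp Require Import all_boot.
Set Implicit Arguments. Unset Strict Implicit. Unset Printing Implicit Defensive.

Record matroid (T : finType) := Matroid {
  indep : {set T} -> bool;
  indep0 : indep set0;
  indep_sub : forall A B : {set T}, A \subset B -> indep B -> indep A;
  indep_aug : forall A B : {set T}, indep A -> indep B -> #|A| < #|B| ->
     exists2 x, x \in B :\: A & indep (x |: A)
}.

Section MatroidNotions.
Variables (T : finType) (M : matroid T).

Definition basis (B : {set T}) : Prop :=
  indep M B /\ forall A : {set T}, B \subset A -> indep M A -> A = B.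

Definition circuit (C : {set T}) : Prop :=
  ~~ indep M C /\ forall D : {set T}, D \proper C -> indep M D.

(* independent sets of the dual matroid M^*: sets avoiding some basis of M *)
Definition coindep (I : {set T}) : Prop :=
  exists B : {set T}, basis B /\ [disjoint I & B].

Definition cocircuit (C : {set T}) : Prop :=
  ~ coindep C /\ forall D : {set T}, D \proper C -> coindep D.

Definition t2t_property (t : nat) : Prop :=
  forall X : {set T}, #|X| = t ->
    (exists C : {set T}, [/\ circuit C, #|C| = 2 * t & X \subset C]) /\
    (exists D : {set T}, [/\ cocircuit D, #|D| = 2 * t & X \subset D]).

End MatroidNotions.

Definition uniform_indep (r n : nat) (Y : {set 'I_n}) : bool := #|Y| <= r.

(* M has a restriction isomorphic to U_{r,n}: there is an injection
   f : 'I_n -> E(M) such that, for every Y, f(Y) is independent in M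
   (equivalently in M|f('I_n)) iff Y is independent in U_{r,n}. *)
Definition has_uniform_restriction (T : finType) (M : matroid T) (r n : nat)
  : Prop :=
  exists f : 'I_n -> T, injective f /\
    forall Y : {set 'I_n}, indep M (f @: Y) = uniform_indep r Y.

(* Fix a restriction f : U_{t,3t} -> M and t points X of its image. A
   cocircuit D of size 2t through X misses the images of at least t of the
   3t points; these images form an independent set I disjoint from D. Since
   the complement of a cocircuit is a hyperplane, adding any e in X to I keeps
   it independent, yet I + e is the image of t + 1 points of U_{t,3t}. *)
From mathcomp Require Import all_boot zify.

Set Implicit Arguments.
Unset Strict Implicit.
Unset Printing Implicit Defensive.

Lemma subset_eq_card (T : finType) (A : {set T}) (n : nat) :
  n <= #|A| -> exists2 Y : {set T}, Y \subset A & #|Y| = n.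
Proof.
case/card_geqP=> s [uniq_s size_s sub_sA].
exists [set x in s]; last by rewrite cardsE (card_uniqP uniq_s).
by apply/subsetP=> x; rewrite inE => /sub_sA.
Qed.

Section MatroidFacts.
Variables (T : finType) (M : matroid T).

Lemma basis_max_card (B I : {set T}) :
  basis M B -> indep M I -> #|I| <= #|B|.
Proof.
move=> [indepB maxB] indepI; rewrite leqNgt; apply/negP => ltBI.
have [x /setDP [_ xNB] indep_xB] := indep_aug indepB indepI ltBI.
have /setP/(_ x) := maxB (x |: B) (subsetUr _ _) indep_xB.
by rewrite !inE eqxx (negbTE xNB).
Qed.

Lemma indep_basis_card (B J : {set T}) :
  basis M B -> indep M J -> #|B| <= #|J| -> basis M J.
Proof.
move=> basisB indepJ leBJ; split=> // A subJA indepA.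
apply/eqP; rewrite eq_sym eqEcard subJA /=.
exact: leq_trans (basis_max_card basisB indepA) leBJ.
Qed.

Lemma indep_augment (I B : {set T}) : indep M I -> indep M B ->
  exists J : {set T},
    [/\ indep M J, I \subset J, J \subset I :|: B & #|B| <= #|J|].
Proof.
move=> + indepB; have [n] := ubnP (#|B| - #|I|).
elim: n I => // n IH I ltn indepI.
have [leBI | ltIB] := leqP #|B| #|I|.
  by exists I; split=> //; apply: subsetUl.
have [x /setDP [xB xNI] indep_xI] := indep_aug indepI indepB ltIB.
have [|J [indepJ sub_xIJ subJ leBJ]] := IH (x |: I) _ indep_xI.
  by rewrite cardsU1 xNI; lia.
exists J; split=> //; first exact: subset_trans (subsetUr _ _) sub_xIJ.
apply: (subset_trans subJ).
by rewrite -setUA subUset subxx sub1set !inE xB orbT.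
Qed.

Lemma basis_extend (B I : {set T}) : basis M B -> indep M I ->
  exists J : {set T}, [/\ basis M J, I \subset J & J \subset I :|: B].
Proof.
move=> basisB indepI.
have [J [indepJ subIJ subJ leBJ]] := indep_augment indepI (proj1 basisB).
by exists J; split=> //; apply: indep_basis_card basisB indepJ leBJ.
Qed.

(* If e is not in the basis J extending I inside I :|: B, where B avoids
   D :\ e, then J avoids D and D would be coindependent. *)
Lemma cocircuit_indepU1 (D I : {set T}) (e : T) :
  cocircuit M D -> e \in D -> indep M I -> [disjoint I & D] ->
  indep M (e |: I).
Proof.
move=> [not_coindepD minD] eD indepI disjID.
have [B [basisB disjDB]] := minD _ (properD1 eD).
have [J [basisJ subIJ subJ]] := basis_extend basisB indepI.
have [eJ | eNJ] := boolP (e \in J).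
  by apply: indep_sub (proj1 basisJ); rewrite subUset sub1set eJ.
case: not_coindepD; exists J; split=> //.
apply/pred0P=> x /=; apply/negbTE/andP=> [[xD xJ]].
have xNe : x != e by apply: contraNneq eNJ => <-.
have /setUP [xI | xB] := subsetP subJ x xJ.
  by rewrite (disjointFr disjID xI) in xD.
by move: (disjointFl disjDB xB); rewrite !inE xNe xD.
Qed.

End MatroidFacts.

Theorem lemma5p2 (T : finType) (M : matroid T) (t : nat) :
  0 < t -> t2t_property M t -> ~ has_uniform_restriction M t (3 * t).
Proof.
move=> t_gt0 t2tM [f [inj_f indep_f]].
have [|S _ cardS] := @subset_eq_card _ [set: 'I_(3 * t)] t.
  by rewrite cardsT card_ord; lia.
have cardfS : #|f @: S| = t by rewrite card_imset.
have [_ [D [cocircuitD cardD subSD]]] := t2tM _ cardfS.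
have card_preD : #|f @^-1: D| <= 2 * t.
  rewrite -cardD -(card_imset _ inj_f); apply: subset_leq_card.
  by rewrite sub_imset_pre.
have [|Y subY cardY] := @subset_eq_card _ (~: f @^-1: D) t.
  by have := cardsC (f @^-1: D); rewrite card_ord; lia.
have [e eS] : exists e, e \in S by apply/card_gt0P; rewrite cardS.
have feD : f e \in D by apply: (subsetP subSD); apply: imset_f.
have eNY : e \notin Y by apply: contraL feD => /(subsetP subY); rewrite !inE.
have disjYD : [disjoint f @: Y & D].
  by rewrite disjoints_subset sub_imset_pre preimsetC.
have indepfY : indep M (f @: Y) by rewrite indep_f /uniform_indep cardY.
have := cocircuit_indepU1 cocircuitD feD indepfY disjYD.
by rewrite -imsetU1 indep_f /uniform_indep cardsU1 eNY cardY ltnn.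
Qed.
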